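(* Let $\mathcal{A}$ be a complete deterministic timed automaton (CTA). If two valid reset-clocked words $\gamma_{r1},\gamma_{r2}$ of $\mathcal{A}$ reach the same symbolic state of $\mathcal{A}$, then $\gamma_{r1}\sim_{\mathscr{L}_r(\mathcal{A})}\gamma_{r2}$.
   Context: Let $\Sigma$ be a finite alphabet and $\mathcal{C}=\{c_1,\dots,c_m\}$ a finite set of clocks. A clock constraint is a finite conjunction of atomic constraints $c\sim k$ ($c\in\mathcal{C}$, $k\in\mathbb{N}$, ${\sim}\in\{<,\le,=,\ge,>\}$). A clock valuation is $\nu:\mathcal{C}\to\mathbb{R}_{\ge0}$ (a vector in $\mathbb{R}_{\ge0}^m$); $\nu+d$ adds $d$ to all clocks, $[\mathcal{B}\to0]\nu$ resets clocks in $\mathcal{B}$. A timed automaton is $\mathcal{A}=(\Sigma,L,l_0,F,\mathcal{C},\Delta)$ with finite location set $L$, initial $l_0$, accepting $F\subseteq L$, transitions $\Delta\subseteq L\times\Sigma\times\Phi(\mathcal{C})\times2^{\mathcal{C}}\times L$. A run over a delay-timed word $(\sigma_1,t_1)\cdots(\sigma_n,t_n)$ is $(l_0,\nu_0)\xrightarrow{t_1,\sigma_1}\cdots\xrightarrow{t_n,\sigma_n}(l_n,\nu_n)$ with $\nu_0\equiv0$ and transitions $(l_{i-1},\sigma_i,\phi_i,\mathcal{B}_i,l_i)\in\Delta$ with $\nu_{i-1}+t_i$ satisfying $\phi_i$ and $\nu_i=[\mathcal{B}_i\to0](\nu_{i-1}+t_i)$; accepting if $l_n\in F$. $\mathcal{A}$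 is a CTA if every delay-timed word has exactly one run. The reset-clocked word of the run is $(\sigma_1,\mathbf{v}_1,\mathbf{b}_1)\cdots(\sigma_n,\mathbf{v}_n,\mathbf{b}_n)$ with $\mathbf{v}_i=\nu_{i-1}+t_i$ and $\mathbf{b}_{i,j}=\top$ iff $c_j\in\mathcal{B}_i$ (else $\bot$). $\mathscr{L}_r(\mathcal{A})$ is the set of reset-clocked words of accepting runs. A reset-clocked word (any finite sequence in $(\Sigma\times\mathbb{R}_{\ge0}^m\times\{\top,\bot\}^m)^*$) is valid for $\mathcal{A}$ if it is the reset-clocked word of some run, and then reaches that run's final symbolic state $(l_n,\llbracket\nu_n\rrbracket)$. $resets(\cdot)$ returns $\mathbf{b}_1,\dots,\mathbf{b}_n$; $vw(\cdot)$ drops resets. Regions: with $\kappa(c)$ the largest integer in guards of $\mathcal{A}$ over $c$, $\nu,\nu'$ are region-equivalent iff (i) for all $c$, $\lfloor\nu(c)\rfloor=\lfloor\nu'(c)\rfloor$ or both exceed $\kappa(c)$; (ii) for $c$ with $\nu(c)\le\kappa(c)$, $\mathrm{frac}(\nu(c))=0$ iff $\mathrm{frac}(\nu'(c))=0$; (iii) for $c_i,c_j$ with $\nu(c_i)\le\kappa(c_i),\nu(c_j)\le\kappa(c_j)$, $\mathrm{frac}(\nu(c_i))\le\mathrm{frac}(\nu(c_j))$ iff $\mathrm{frac}(\nu'(c_i))\le\mathrm{frac}(\nu'(c_j))$; $\llbracket\nu\rrbracket$ denotes the region, symbolic states are pairs (location, region). A region word is a finite sequence of pairs $(\sigma,R)$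 with $R$ a region; a clocked word maps to its region word $\llbracket\cdot\rrbracket$ componentwise. $\mathit{vs}_{\mathcal{A}}(\gamma_r,\xi)$ is the set of reset-clocked $\gamma_r'$ with $\llbracket vw(\gamma_r')\rrbracket=\xi$ and $\gamma_r\gamma_r'$ valid for $\mathcal{A}$. The relation $\gamma_{r1}\sim_{\mathscr{L}_r(\mathcal{A})}\gamma_{r2}$ holds iff for every region word $\xi$ and all $\gamma_{r1}'\in\mathit{vs}_{\mathcal{A}}(\gamma_{r1},\xi)$, $\gamma_{r2}'\in\mathit{vs}_{\mathcal{A}}(\gamma_{r2},\xi)$: $\gamma_{r1}\gamma_{r1}'\in\mathscr{L}_r(\mathcal{A})$ iff $\gamma_{r2}\gamma_{r2}'\in\mathscr{L}_r(\mathcal{A})$, and $resets(\gamma_{r1}')=resets(\gamma_{r2}')$. *)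

From Stdlib Require Import Reals List.
From mathcomp Require Import all_boot.
Set Implicit Arguments.
Unset Strict Implicit.
Unset Printing Implicit Defensive.

Local Open Scope R_scope.

Inductive cmp := CLt | CLe | CEq | CGe | CGt.

Definition cmp_sem (o : cmp) (x y : R) : Prop :=
  match o with
  | CLt => x < y | CLe => x <= y | CEq => x = y | CGe => x >= y | CGt => x > y
  end.

Section TA.
Variables (Sigma L C : finType).

Definition atom := (C * cmp * nat)%type.
Definition guard := seq atom.

Definition valuation := C -> R.

Definition sat_atom (nu : valuation) (a : atom) : Prop :=
  let '(c, o, k) := a in cmp_sem o (nu c) (INR k).
Definition sat (nu : valuation) (g : guard) : Prop :=
  forall a, List.In a g -> sat_atom nu a.

Definition shift (nu : valuation) (d : R) : valuation := fun c => nu c + d.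
Definition reset (B : {set C}) (nu : valuation) : valuation :=
  fun c => if c \in B then 0 else nu c.
Definition zero_val : valuation := fun _ => 0.

Definition trans := (L * Sigma * guard * {set C} * L)%type.

Record TA := mkTA {
  l0 : L;
  Fin : L -> Prop;
  Delta : seq trans
}.

(** reset-clocked letter (sigma, v, b); the reset vector b in {T,F}^m is
    encoded as the set of clocks c_j with b_j = T. *)
Definition rcletter := (Sigma * valuation * {set C})%type.
Definition rcword := seq rcletter.

(** [exec A l nu w ds g l' nu'] : starting from configuration (l,nu), the
    delay-timed word w has run with transition sequence ds, producing the
    reset-clocked word g and ending in configuration (l',nu'). *)
Inductive exec (A : TA) : L -> valuation -> seq (Sigma * R) -> seq trans ->
    rcword -> L -> valuation -> Prop :=
| exec_nil l nu : exec A l nu [::] [::] [::] l nu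
| exec_cons l nu s t phi B l1 w ds g l' nu' :
    List.In (l, s, phi, B, l1) (Delta A) ->
    0 <= t ->
    sat (shift nu t) phi ->
    exec A l1 (reset B (shift nu t)) w ds g l' nu' ->
    exec A l nu ((s, t) :: w) ((l, s, phi, B, l1) :: ds)
         ((s, shift nu t, B) :: g) l' nu'.

Definition delay_word (w : seq (Sigma * R)) : Prop :=
  forall s t, List.In (s, t) w -> 0 <= t.

Definition is_run (A : TA) (w : seq (Sigma * R)) (ds : seq trans) : Prop :=
  exists g l nu, exec A (l0 A) zero_val w ds g l nu.

Definition CTA (A : TA) : Prop :=
  forall w, delay_word w -> exists! ds, is_run A w ds.

Definition Lr (A : TA) (g : rcword) : Prop :=
  exists w ds l nu, exec A (l0 A) zero_val w ds g l nu /\ Fin A l.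

Definition valid (A : TA) (g : rcword) : Prop :=
  exists w ds l nu, exec A (l0 A) zero_val w ds g l nu.

(** kappa(c): largest integer constant in guards of A over clock c
    (0 if c does not occur in any guard) *)
Definition kappa (A : TA) (c : C) : nat :=
  foldr maxn 0%N [seq a.2 | a <- flatten [seq tr.1.1.2 | tr <- Delta A]
                          & a.1.1 == c].

Definition region_equiv (A : TA) (nu nu' : valuation) : Prop :=
  (forall c, Int_part (nu c) = Int_part (nu' c) \/
             (nu c > INR (kappa A c) /\ nu' c > INR (kappa A c))) /\
  (forall c, nu c <= INR (kappa A c) ->
             (frac_part (nu c) = 0 <-> frac_part (nu' c) = 0)) /\
  (forall ci cj, nu ci <= INR (kappa A ci) -> nu cj <= INR (kappa A cj) ->
       (frac_part (nu ci) <= frac_part (nu cj) <->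
        frac_part (nu' ci) <= frac_part (nu' cj))).

Definition region (A : TA) (nu : valuation) : valuation -> Prop :=
  fun nu' => region_equiv A nu nu'.

Definition sym_state (A : TA) (l : L) (nu : valuation) :=
  (l, region A nu).

Definition reaches (A : TA) (g : rcword) (l : L) (nu : valuation) : Prop :=
  exists w ds, exec A (l0 A) zero_val w ds g l nu.

Definition region_word := seq (Sigma * (valuation -> Prop)).

Definition region_of (A : TA) (g : rcword) : region_word :=
  [seq (x.1.1, region A x.1.2) | x <- g].

Definition resets (g : rcword) : seq {set C} := [seq x.2 | x <- g].

Definition vs (A : TA) (g : rcword) (xi : region_word) (g' : rcword) : Prop :=
  region_of A g' = xi /\ valid A (g ++ g').

Definition rc_equiv (A : TA) (g1 g2 : rcword) : Prop :=
  forall (xi : region_word) (g1' g2' : rcword),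
    vs A g1 xi g1' -> vs A g2 xi g2' ->
    (Lr A (g1 ++ g1') <-> Lr A (g2 ++ g2')) /\ resets g1' = resets g2'.

End TA.

(* A guard only compares a clock with an integer k <= kappa, so it is decided
   by the region of the valuation.  In a CTA a reachable configuration has at
   most one enabled transition for a given letter and delay: two of them would
   give two runs of the same delay-timed word.  Hence, from two reachable
   configurations in the same location, continuations with the same region
   word take the same transitions step by step, since each guard is evaluated
   at a valuation whose region the word records.  They therefore reset the
   same clocks and end in the same location, so they agree on acceptance. *)

From Pilot Require Import Defs.
From Stdlib Require Import Reals Lra Lia.
From mathcomp Require Import all_boot.

Set Implicit Arguments.
Unset Strict Implicit.

Open Scope R_scope.

Lemma cmp_sem_Int_part o x y k :
  Int_part x = Int_part y -> (frac_part x = 0 <-> frac_part y = 0) ->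
  cmp_sem o x (INR k) -> cmp_sem o y (INR k).
Proof.
move=> HI Hf; rewrite /frac_part -HI in Hf.
have [Hx1 Hx2] := base_Int_part x; have [Hy1 Hy2] := base_Int_part y.
rewrite -HI in Hy1 Hy2; rewrite INR_IZR_INZ.
set N := Int_part x in Hf Hx1 Hx2 Hy1 Hy2; set K := Z.of_nat k.
have [NK|[<-|KN]] := Z.lt_total N K.
- have : IZR N + 1 <= IZR K by rewrite -plus_IZR; apply: IZR_le; lia.
  by case: o => /=; lra.
- have [Nx|Nx] := Rle_lt_or_eq_dec _ _ Hx1.
  + have Ny : IZR N < y.
      case: (Rle_lt_or_eq_dec _ _ Hy1) => // Ny.
      suff : x - IZR N = 0 by lra.
      by apply Hf; lra.
    by case: o => /=; lra.
  + have Ny : y - IZR N = 0 by apply Hf; lra.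
    by case: o => /=; lra.
- have : IZR K + 1 <= IZR N by rewrite -plus_IZR; apply: IZR_le; lia.
  by case: o => /=; lra.
Qed.

Lemma cmp_sem_above o x y k :
  INR k < x -> INR k < y -> cmp_sem o x (INR k) -> cmp_sem o y (INR k).
Proof. by case: o => /=; lra. Qed.

Lemma foldr_maxn_ge (T : Type) (f : T -> nat) (p : pred T) (s : seq T) x :
  List.In x s -> p x -> (f x <= foldr maxn 0 [seq f a | a <- s & p a])%N.
Proof.
elim: s => [//|y s IH] /= [<- ->|xs px] /=; first exact: leq_maxl.
by case: (p y) => /=; [apply: leq_trans (leq_maxr _ _)|]; apply: IH.
Qed.

Lemma In_flatten_map (T U : Type) (F : T -> seq U) (s : seq T) t x :
  List.In t s -> List.In x (F t) -> List.In x (flatten [seq F a | a <- s]).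
Proof.
elim: s => [//|y s IH] /= [->|ts] Hx.
  by elim: (F t) Hx => [//|z r IHr] /= [->|?]; [left|right; auto].
by elim: (F y) => [|z r IHr] /=; [exact: IH|right].
Qed.

Section Regions.
Variables (Sigma L C : finType) (A : TA Sigma L C).

Lemma kappa_ge l s phi B l' c o k :
  List.In (l, s, phi, B, l') (Defs.Delta A) -> List.In (c, o, k) phi ->
  (k <= kappa A c)%N.
Proof.
move=> Htr Ha; apply: (foldr_maxn_ge snd (x := (c, o, k))); last by rewrite /= eqxx.
exact: (In_flatten_map (F := fun tr : trans Sigma L C => tr.1.1.2) Htr).
Qed.

Lemma region_equiv_refl nu : region_equiv A nu nu.
Proof. by split; [left|split]. Qed.

Lemma region_eq_equiv nu nu' :
  region A nu = region A nu' -> region_equiv A nu' nu.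
Proof. by move=> Hr; change (region A nu' nu); rewrite -Hr; apply: region_equiv_refl. Qed.

Lemma region_equiv_below nu nu' c :
  region_equiv A nu nu' -> nu c <= INR (kappa A c) ->
  Int_part (nu c) = Int_part (nu' c) /\
  (frac_part (nu c) = 0 <-> frac_part (nu' c) = 0).
Proof. by case=> [Hint [Hfrac _]] Hc; case: (Hint c) => [|[]]; [split; auto|lra]. Qed.

Lemma region_equiv_cmp nu nu' c o k :
  region_equiv A nu nu' -> region_equiv A nu' nu -> (k <= kappa A c)%N ->
  cmp_sem o (nu c) (INR k) -> cmp_sem o (nu' c) (INR k).
Proof.
move=> E E' /leP/le_INR Hk.
have [Hc|Hc] := Rle_or_lt (nu c) (INR (kappa A c)).
  by have [HI Hf] := region_equiv_below E Hc; apply: cmp_sem_Int_part.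
have [Hc'|Hc'] := Rle_or_lt (nu' c) (INR (kappa A c)); last by apply: cmp_sem_above; lra.
have [HI Hf] := region_equiv_below E' Hc'.
by apply: cmp_sem_Int_part; [rewrite HI|apply: iff_sym].
Qed.

Lemma sat_region l s phi B l' nu nu' :
  List.In (l, s, phi, B, l') (Defs.Delta A) -> region A nu = region A nu' ->
  sat nu phi -> sat nu' phi.
Proof.
move=> Htr Hr Hsat [[c o] k] Ha.
have E := region_eq_equiv (esym Hr); have E' := region_eq_equiv Hr.
exact: region_equiv_cmp E E' (kappa_ge Htr Ha) (Hsat _ Ha).
Qed.

End Regions.

Section Runs.
Variables (Sigma L C : finType) (A : TA Sigma L C).

Definition reachable (l : L) (nu : valuation C) : Prop :=
  exists w ds g, exec A (l0 A) (@zero_val C) w ds g l nu.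

Lemma exec_cat l nu w1 ds1 g1 l1 nu1 w2 ds2 g2 l2 nu2 :
  exec A l nu w1 ds1 g1 l1 nu1 -> exec A l1 nu1 w2 ds2 g2 l2 nu2 ->
  exec A l nu (w1 ++ w2) (ds1 ++ ds2) (g1 ++ g2) l2 nu2.
Proof. by elim=> //= *; apply: exec_cons; auto. Qed.

Lemma exec_rcons l nu w ds g l1 nu1 s t phi B l2 :
  exec A l nu w ds g l1 nu1 ->
  List.In (l1, s, phi, B, l2) (Defs.Delta A) -> 0 <= t -> sat (shift nu1 t) phi ->
  exec A l nu (rcons w (s, t)) (rcons ds (l1, s, phi, B, l2))
    (rcons g (s, shift nu1 t, B)) l2 (reset B (shift nu1 t)).
Proof.
move=> E Htr Ht Hsat; rewrite -!cats1; apply: exec_cat E _.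
by apply: exec_cons => //; constructor.
Qed.

Lemma exec_delay_word l nu w ds g l' nu' :
  exec A l nu w ds g l' nu' -> delay_word w.
Proof.
move=> E s' t'; elim: E => //= {}l {}nu s t phi B l1 {}w {}ds {}g {}l' {}nu' _ Ht _ _ IH.
by case=> [[_ <-]|/IH].
Qed.

Lemma exec_cat_inv g1 g2 l nu w ds l2 nu2 :
  exec A l nu w ds (g1 ++ g2) l2 nu2 ->
  exists w1 ds1 l1 nu1 w2 ds2,
    exec A l nu w1 ds1 g1 l1 nu1 /\ exec A l1 nu1 w2 ds2 g2 l2 nu2.
Proof.
elim: g1 l nu w ds => [|a g1 IH] l nu w ds /= E.
  by exists [::], [::], l, nu, w, ds; split=> //; constructor.
inversion E as [|? ? s t phi B l' w' ds' ? ? ? Htr Ht Hsat E']; subst.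
have [w1 [ds1 [l1 [nu1 [w2 [ds2 [E1 E2]]]]]]] := IH _ _ _ _ E'.
exists ((s, t) :: w1), ((l, s, phi, B, l') :: ds1), l1, nu1, w2, ds2.
by split=> //; apply: exec_cons.
Qed.

Lemma reachable_step l nu s t phi B l' :
  reachable l nu -> List.In (l, s, phi, B, l') (Defs.Delta A) -> 0 <= t ->
  sat (shift nu t) phi -> reachable l' (reset B (shift nu t)).
Proof.
by case=> [w [ds [g E]]] Htr Ht Hsat; do 3 eexists; apply: exec_rcons E Htr Ht Hsat.
Qed.

Hypothesis HA : CTA A.

Lemma CTA_transition_unique l nu s t phi1 B1 l1 phi2 B2 l2 :
  reachable l nu -> 0 <= t ->
  List.In (l, s, phi1, B1, l1) (Defs.Delta A) -> sat (shift nu t) phi1 ->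
  List.In (l, s, phi2, B2, l2) (Defs.Delta A) -> sat (shift nu t) phi2 ->
  (l, s, phi1, B1, l1) = (l, s, phi2, B2, l2).
Proof.
case=> [w [ds [g E]]] Ht Htr1 Hsat1 Htr2 Hsat2.
have E1 := exec_rcons E Htr1 Ht Hsat1; have E2 := exec_rcons E Htr2 Ht Hsat2.
have [ds0 [_ run_unique]] := HA (exec_delay_word E1).
apply: rcons_injr (etrans (esym (run_unique _ _)) (run_unique _ _)).
  by do 3 eexists; exact: E1.
by do 3 eexists; exact: E2.
Qed.

Lemma exec_region_word_unique l nu1 w1 ds1 h1 l1 nu1' :
  exec A l nu1 w1 ds1 h1 l1 nu1' ->
  forall nu2 w2 ds2 h2 l2 nu2', exec A l nu2 w2 ds2 h2 l2 nu2' ->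
  reachable l nu1 -> reachable l nu2 -> region_of A h1 = region_of A h2 ->
  l1 = l2 /\ resets h1 = resets h2.
Proof.
elim=> {l nu1 w1 ds1 h1 l1 nu1'} [l nu|l nu s t phi B l' w ds g l1' nu' Htr Ht Hsat _ IH]
  nu2 w2 ds2 [|a h2] l2 nu2' E2 reach1 reach2 //=.
  by inversion E2.
inversion E2 as [|? ? s' t' phi' B' l'' w' ds' ? ? ? Htr' Ht' Hsat' E2']; subst.
case=> ? Hreg /IH {}IH; subst s'.
have Hsat'' := sat_region Htr' (esym Hreg) Hsat'.
case: (CTA_transition_unique reach1 Ht Htr Hsat Htr' Hsat'') => ? ? ?; subst.
have reach1' := reachable_step reach1 Htr Ht Hsat.
have reach2' := reachable_step reach2 Htr' Ht' Hsat'.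
by have [-> ->] := IH _ _ _ _ _ E2' reach1' reach2'.
Qed.

Lemma exec_cat_suffix g h l nu w ds w' ds' l' nu' :
  exec A (l0 A) (@zero_val C) w ds g l nu ->
  exec A (l0 A) (@zero_val C) w' ds' (g ++ h) l' nu' ->
  exists nu1 w1 ds1, reachable l nu1 /\ exec A l nu1 w1 ds1 h l' nu'.
Proof.
move=> Eg /exec_cat_inv [w0 [ds0 [l1 [nu1 [w1 [ds1 [Eg' Eh]]]]]]].
have reach0 : reachable (l0 A) (@zero_val C) by exists [::], [::], [::]; constructor.
have [El _] := exec_region_word_unique Eg' Eg reach0 reach0 erefl; subst l1.
by exists nu1, w1, ds1; split=> //; exists w0, ds0, g.
Qed.

Lemma exec_cat_final_unique g1 g2 h1 h2 l nu1 nu2 w1 ds1 l1 nu1' w2 ds2 l2 nu2' :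
  reaches A g1 l nu1 -> reaches A g2 l nu2 -> region_of A h1 = region_of A h2 ->
  exec A (l0 A) (@zero_val C) w1 ds1 (g1 ++ h1) l1 nu1' ->
  exec A (l0 A) (@zero_val C) w2 ds2 (g2 ++ h2) l2 nu2' ->
  l1 = l2 /\ resets h1 = resets h2.
Proof.
move=> [? [? Eg1]] [? [? Eg2]] Hreg E1 E2.
have [nu1'' [w1' [ds1' [reach1 Eh1]]]] := exec_cat_suffix Eg1 E1.
have [nu2'' [w2' [ds2' [reach2 Eh2]]]] := exec_cat_suffix Eg2 E2.
exact: (exec_region_word_unique Eh1 Eh2 reach1 reach2 Hreg).
Qed.

End Runs.

Theorem lemma3p8 (Sigma L C : finType) (A : TA Sigma L C)
  (g1 g2 : rcword Sigma C) (l1 l2 : L) (nu1 nu2 : valuation C) :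
  CTA A ->
  reaches A g1 l1 nu1 ->
  reaches A g2 l2 nu2 ->
  sym_state A l1 nu1 = sym_state A l2 nu2 ->
  rc_equiv A g1 g2.
Proof.
(* Only the locations are compared: the region word of a continuation already
   fixes the region of every valuation at which a guard is evaluated. *)
move=> HA reach1 reach2 [El _] xi g1' g2' [Hxi1 [w1 [ds1 [l1' [nu1' E1]]]]]
  [Hxi2 [w2 [ds2 [l2' [nu2' E2]]]]].
subst l2.
have Hreg : region_of A g1' = region_of A g2' by rewrite Hxi1 Hxi2.
split; last exact: (exec_cat_final_unique HA reach1 reach2 Hreg E1 E2).2.
split=> [[w [ds [l [nu [E Hfin]]]]]|[w [ds [l [nu [E Hfin]]]]]].
- exists w2, ds2, l2', nu2'; split=> //.
  by have [<- _] := exec_cat_final_unique HA reach1 reach2 Hreg E E2.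
- exists w1, ds1, l1', nu1'; split=> //.
  by have [-> _] := exec_cat_final_unique HA reach1 reach2 Hreg E1 E.
Qed.
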